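(* Let $q$ be a power of an odd prime, $a\in\mathbb{F}_q^*$ with $a\neq\pm1$, $b\in\mathbb{F}_q$ a nonsquare, $\beta\in\mathbb{F}_{q^2}$ with $\beta^2=b$, and $f(X)=X^{q+1}+aX^2$ on $\mathbb{F}_{q^2}$. For $\gamma\in\mathbb{F}_{q^2}$ let $f^{-1}(\gamma)=\{X\in\mathbb{F}_{q^2}: f(X)=\gamma\}$. Let $\alpha\in\mathbb{F}_q^*$. Then: (1) $\#f^{-1}(\alpha)=0$ if $\chi_2(\alpha(a-1))=1$ and $\chi_2(\alpha(a+1))=-1$; $\#f^{-1}(\alpha)=4$ if $\chi_2(\alpha(a-1))=-1$ and $\chi_2(\alpha(a+1))=1$; and $\#f^{-1}(\alpha)=2$ otherwise. (2) If $q\equiv3\pmod4$, then $\#f^{-1}(\alpha\beta)=0$ if $\chi_2(1-a^2)=1$ and $\#f^{-1}(\alpha\beta)=2$ if $\chi_2(1-a^2)=-1$. (3) If $q\equiv1\pmod4$, then $\#f^{-1}(\alpha\beta)=4$ if $\chi_2(1-a^2)=-1$ and $\chi_2(2\gamma_a\alpha a)=1$, and $\#f^{-1}(\alpha\beta)=0$ otherwise, where (when $\chi_2(1-a^2)=-1$) $\gamma_a\in\mathbb{F}_q$ satisfies $\gamma_a^2=-\frac{(a-1)b}{a+1}$.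
   Context: $\chi_2$ is the quadratic character of $\mathbb{F}_q$: $\chi_2(\alpha)=1$ if $\alpha$ is a nonzero square, $-1$ if $\alpha$ is a nonsquare, $0$ if $\alpha=0$. *)

From mathcomp Require Import all_boot all_order all_algebra all_field.
Set Implicit Arguments. Unset Strict Implicit. Unset Printing Implicit Defensive.
Import GRing.Theory.
Local Open Scope ring_scope.

(* L plays the role of F_{q^2}; F_q is the subfield {x | x^q = x}. *)
Definition inFq (L : finFieldType) (q : nat) (x : L) : bool := x ^+ q == x.

Definition chi2 (L : finFieldType) (q : nat) (x : L) : int :=
  if x == 0 then 0
  else if [exists y : L, inFq q y && (y ^+ 2 == x)] then 1 else -1.

Definition ff (L : finFieldType) (q : nat) (a X : L) : L := X ^+ q.+1 + a * X ^+ 2.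

Definition npre (L : finFieldType) (q : nat) (a g : L) : nat :=
  #|[set X : L | ff q a X == g]|.

(* As b is a nonsquare
   of F_q, beta is not in F_q and every X in L is uniquely x + y beta with
   x, y in F_q, where
     f(x + y beta) = ((1 + a) x^2 + (a - 1) b y^2) + 2 a x y beta.
   Hence f(X) = alpha forces x y = 0, and f(X) = alpha beta forces
   x = +-gamma_a y. In both cases the solutions of f(X) = c lie on two F_q-lines
   F_q u and F_q v, and f(Y u) = Y^2 f(u) for Y in F_q, so each line carries two
   or no solutions according as c / f(u) is a square in F_q or not. The stated
   counts follow from the multiplicativity of chi_2 on F_q, the fact that b
   times a nonsquare is a square, and chi_2(-1) = 1 iff q = 1 mod 4. *)

From HB Require Import structures.
From mathcomp Require Import all_boot all_order all_algebra all_field pgroup cyclic.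
From mathcomp Require Import ring zify.
Set Implicit Arguments. Unset Strict Implicit. Unset Printing Implicit Defensive.
Import GRing.Theory.
Local Open Scope ring_scope.

Lemma finField_pnat_card (F : finFieldType) p : p \in [pchar F] -> p.-nat #|F|.
Proof. by move=> pcharFp; have := pprimeChar_pgroup pcharFp; rewrite /pgroup cardsT. Qed.

Lemma finField_prim_root (F : finFieldType) : exists w : F, (#|F|.-1).-primitive_root w.
Proof.
have F_gt1 := finNzRing_gt1 F.
have N_gt0 : (0 < #|F|.-1)%N by rewrite -ltnS prednK // ltnW.
have unity : all (#|F|.-1).-unity_root (enum (predC1 (0 : F))).
  apply/allP => x; rewrite mem_enum /= => x0; rewrite unity_rootE.
  by rewrite -(inj_eq (mulfI x0)) -exprS prednK ?expf_card ?mulr1 // ltnW.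
have [|w _ w_prim] := hasP (has_prim_root N_gt0 unity (enum_uniq _) _).
  by rewrite -cardE cardC1.
by exists w.
Qed.

Definition Fq_square (L : finFieldType) (q : nat) (c : L) : bool :=
  [exists y : L, inFq q y && (y ^+ 2 == c)].

Lemma Fq_squareP (L : finFieldType) q (c : L) :
  reflect (exists2 y, y \in inFq q & y ^+ 2 = c) (Fq_square q c).
Proof.
apply: (iffP existsP) => [[y /andP[Fy /eqP y2]]|[y Fy y2]]; first by exists y.
by exists y; apply/andP; split; last exact/eqP.
Qed.

Lemma chi2_eq1 (L : finFieldType) q (c : L) : c != 0 -> (chi2 q c == 1) = Fq_square q c.
Proof. by move=> c0; rewrite /chi2 (negbTE c0) -/(Fq_square q c); case: Fq_square. Qed.

Lemma chi2_eqN1 (L : finFieldType) q (c : L) : c != 0 -> (chi2 q c == -1) = ~~ Fq_square q c.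
Proof. by move=> c0; rewrite /chi2 (negbTE c0) -/(Fq_square q c); case: Fq_square. Qed.

Lemma Fq_frob (L : finFieldType) q (x : L) : x \in inFq q -> x ^+ q = x.
Proof. exact: eqP. Qed.

Lemma Fq_squareMsqr (L : finFieldType) q (c d : L) : d \in inFq q -> d != 0 ->
  Fq_square q (c * d ^+ 2) = Fq_square q c.
Proof.
move=> Fd d0; apply/Fq_squareP/Fq_squareP => [[y Fy y2]|[y Fy y2]].
  exists (y / d); last by rewrite expr_div_n y2 mulfK // expf_neq0.
  by rewrite /inFq unfold_in expr_div_n !Fq_frob.
by exists (y * d); rewrite ?exprMn ?y2 // /inFq unfold_in exprMn !Fq_frob.
Qed.

Lemma ffZ (L : finFieldType) q (a Y X : L) : Y \in inFq q ->
  ff q a (Y * X) = Y ^+ 2 * ff q a X.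
Proof. by move=> FY; rewrite /ff !exprMn [Y ^+ q.+1]exprS Fq_frob //; ring. Qed.

Lemma ff0 (L : finFieldType) q (a : L) : ff q a 0 = 0.
Proof. by rewrite /ff !expr0n mulr0 addr0. Qed.

Lemma ff_neq0 (L : finFieldType) q (a u : L) : ff q a u != 0 -> u != 0.
Proof. by apply: contraNneq => ->; rewrite ff0. Qed.

Section QuadraticExtension.

Variables (L : finFieldType) (q : nat).
Hypotheses (cardL : #|L| = (q ^ 2)%N) (q_odd : odd q).

Lemma q_gt1 : (1 < q)%N.
Proof. by have := finNzRing_gt1 L; rewrite cardL; case: q q_odd => [|[|]]. Qed.

Lemma frobD (x y : L) : (x + y) ^+ q = x ^+ q + y ^+ q.
Proof.
have [p _ pcharLp] := finPcharP L.
apply: exprDn_pchar; rewrite (eq_pnat _ (pcharf_eq pcharLp)).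
apply: (pnat_dvd (n := #|L|)); first by rewrite cardL expnS dvdn_mulr.
exact: finField_pnat_card.
Qed.

Lemma frobN (x : L) : (- x) ^+ q = - x ^+ q.
Proof. by rewrite exprNn -signr_odd q_odd mulN1r. Qed.

Lemma frobB (x y : L) : (x - y) ^+ q = x ^+ q - y ^+ q.
Proof. by rewrite frobD frobN. Qed.

Lemma frobK (x : L) : (x ^+ q) ^+ q = x.
Proof. by rewrite -exprM mulnn -cardL expf_card. Qed.

Lemma two_neq0 : (2 : L) != 0.
Proof.
apply/negP => /eqP two0.
have pchar2 : 2 \in [pchar L] by rewrite inE two0 eqxx.
have := finField_pnat_card pchar2; rewrite cardL => /part_pnat_id.
rewrite p_part => e.
have := finNzRing_gt1 L; rewrite cardL -e.
have : odd (2 ^ logn 2 (q ^ 2)) by rewrite e oddX q_odd orbT.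
by rewrite oddX /= orbF => /eqP ->.
Qed.

Lemma eqrN_self (x : L) : (x == - x) = (x == 0).
Proof. by rewrite -addr_eq0 -mulr2n -mulr_natl mulf_eq0 (negbTE two_neq0). Qed.

Fact inFq_divring_closed : divring_closed (inFq q : pred L).
Proof.
split=> [|x y|x y]; rewrite !unfold_in /inFq.
- by rewrite expr1n.
- by rewrite frobB => /eqP-> /eqP->.
- by rewrite exprMn exprVn => /eqP-> /eqP->.
Qed.

HB.instance Definition _ := GRing.isDivringClosed.Build L (inFq q) inFq_divring_closed.

(* [done] does not recognise a hypothesis [x \in inFq q] as a proof of the
   side conditions [x \in S] produced by the rpred lemmas, hence the match. *)
Ltac Fq_closed :=
  repeat first [ match goal with H : is_true (_ \in inFq _) |- _ => exact: H end
               | apply: rpred0 | apply: rpred1 | apply: rpred_nat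
               | apply: rpredB | apply: rpredD | rewrite rpredN | apply: rpredM
               | apply: rpred_div | apply: rpredX ].

Lemma Fq_expf_pred (y : L) : y \in inFq q -> y != 0 -> y ^+ q.-1 = 1.
Proof.
move=> Fy y0; apply: (mulfI y0).
by rewrite -exprS prednK ?Fq_frob ?mulr1 // ltnW // q_gt1.
Qed.

(* c is a power of w ^+ q.+1, a primitive (q - 1)-th root of unity, and q + 1 is even. *)
Lemma Fq_sqrt (c : L) : c \in inFq q -> exists z : L, z ^+ 2 = c.
Proof.
move=> Fc; have [->|c0] := eqVneq c 0; first by exists 0; rewrite expr0n.
have [w w_prim] := finField_prim_root L.
have N_eq : #|L|.-1 = (q.-1 * q.+1)%N by have := q_gt1; rewrite cardL; nia.
rewrite N_eq in w_prim.
have g_prim : (q.-1).-primitive_root (w ^+ q.+1).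
  have := dvdn_prim_root w_prim (dvdn_mulr q.+1 (dvdnn q.-1)).
  by rewrite mulKn //; have := q_gt1; lia.
have [i ->] := prim_rootP g_prim (Fq_expf_pred Fc c0).
exists (w ^+ (uphalf q * i)); rewrite -!exprM; congr (w ^+ _).
by have := odd_double_half q; rewrite q_odd uphalf_half q_odd /=; lia.
Qed.

Lemma Fq_square_N1 : Fq_square q (-1 : L) = (q %% 4 == 1)%N.
Proof.
apply/idP/idP.
  case/Fq_squareP => y Fy y2.
  have y0 : y != 0 by apply: contra_eq_neq y2 => ->; rewrite expr0n eq_sym oppr_eq0 oner_eq0.
  have : (-1 : L) ^+ (q.-1)./2 = 1.
    rewrite -y2 -exprM -(Fq_expf_pred Fy y0); congr (y ^+ _).
    by have := odd_double_half q; rewrite q_odd /=; lia.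
  have [odd_half|even_half] := boolP (odd (q.-1)./2).
    by rewrite -signr_odd odd_half => /eqP; rewrite eq_sym eqrN_self oner_eq0.
  move=> _; have := odd_double_half q; have := odd_double_half (q.-1)./2.
  by rewrite q_odd (negbTE even_half); lia.
move=> /eqP q1.
have [w w_prim] := finField_prim_root L.
have N4 : (4 %| #|L|.-1)%N by rewrite cardL; apply/dvdnP; exists ((q %/ 4) * q.+1)%N; nia.
have i_prim := dvdn_prim_root w_prim N4; set i := w ^+ _ in i_prim.
apply/Fq_squareP; exists i.
  have q4 : (4 %| q.-1)%N by apply/dvdnP; exists (q %/ 4)%N; lia.
  rewrite unfold_in /inFq -{1}(prednK (odd_gt0 q_odd)) exprS.
  by move: q4; rewrite (prim_order_dvd i_prim) => /eqP->; rewrite mulr1.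
have : (i ^+ 2 == 1) || (i ^+ 2 == -1) by rewrite -sqrf_eq1 -exprM prim_expr_order.
by rewrite -(prim_order_dvd i_prim) /= => /eqP.
Qed.

Lemma card_Fq_sqrt (c : L) : c != 0 ->
  #|[set Y : L | (Y \in inFq q) && (Y ^+ 2 == c)]| = if Fq_square q c then 2 else 0.
Proof.
move=> c0; case: (Fq_squareP _ c) => [[r Fr r2]|no_sqrt].
  have -> : [set Y : L | (Y \in inFq q) && (Y ^+ 2 == c)] = [set r; - r].
    apply/setP => Y; rewrite !inE -r2 eqf_sqr.
    by apply/andP/orP => [[_ /orP //]|[]/eqP->]; rewrite ?rpredN ?eqxx ?orbT.
  rewrite cards2 eqrN_self.
  suff -> : r != 0 by [].
  by apply: contra_neq c0 => r0; rewrite -r2 r0 expr0n.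
apply/eqP; rewrite cards_eq0; apply/eqP/setP => Y; rewrite !inE.
by apply/andP => -[FY /eqP Y2]; apply: no_sqrt; exists Y.
Qed.

Lemma card_ff_line (a c u : L) : c != 0 -> ff q a u != 0 ->
  #|[set X | (X / u \in inFq q) && (ff q a X == c)]| =
    if Fq_square q (c / ff q a u) then 2 else 0.
Proof.
move=> c0 fu0.
have u0 := ff_neq0 fu0.
rewrite -card_Fq_sqrt ?mulf_neq0 ?invr_eq0 //.
rewrite -(card_imset _ (mulIf u0)); apply: eq_card => X; rewrite inE.
apply/andP/imsetP => [[FXu /eqP <-]|[Y]].
  exists (X / u); last by rewrite divfK.
  by rewrite inE FXu -[X in ff q a X](divfK u0) ffZ // mulfK ?eqxx.
by rewrite inE => /andP[FY /eqP Y2] ->; rewrite mulfK // FY ffZ // Y2 divfK.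
Qed.

Lemma npre_two_lines (a c u v : L) : c != 0 -> ff q a u != 0 -> ff q a v != 0 ->
  v / u \notin inFq q ->
  (forall X, ff q a X = c -> (X / u \in inFq q) || (X / v \in inFq q)) ->
  npre q a c = ((if Fq_square q (c / ff q a u) then 2 else 0) +
                (if Fq_square q (c / ff q a v) then 2 else 0))%N.
Proof.
move=> c0 fu0 fv0 vu_notin cover.
rewrite -(card_ff_line c0 fu0) -(card_ff_line c0 fv0) -cardsUI.
set Lu := [set X | _ && _]; set Lv := [set X | _ && _].
have -> : Lu :&: Lv = set0.
  apply/setP => X; rewrite !inE; apply/negP => /andP[/andP[FXu /eqP fX] /andP[FXv _]].
  have X0 : X != 0 by apply: contra_eq_neq fX => ->; rewrite ff0 eq_sym.
  case/negP: vu_notin; have -> : v / u = (X / u) / (X / v).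
    by field; rewrite X0 (ff_neq0 fu0) (ff_neq0 fv0).
  exact: rpred_div.
rewrite cards0 addn0 /npre; apply: eq_card => X; rewrite !inE.
apply/eqP/orP => [fX|[] /andP[_ /eqP //]].
by case/orP: (cover X fX) => ?; [left | right]; rewrite fX eqxx andbT.
Qed.

Variables (b beta : L).
Hypotheses (Fq_b : b \in inFq q) (b_chi2 : chi2 q b = -1) (beta_sqr : beta ^+ 2 = b).

Lemma b_neq0 : b != 0.
Proof. by apply: contra_eq_neq b_chi2 => ->; rewrite /chi2 eqxx. Qed.

Lemma b_nonsquare : ~~ Fq_square q b.
Proof. by rewrite -chi2_eqN1 ?b_chi2 ?b_neq0. Qed.

Lemma beta_neq0 : beta != 0.
Proof. by apply: contra_eq_neq beta_sqr => ->; rewrite expr0n eq_sym b_neq0. Qed.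

Lemma frob_beta : beta ^+ q = - beta.
Proof.
have : (beta ^+ q - beta) * (beta ^+ q + beta) == 0.
  by rewrite -subr_sqr -exprM mulnC exprM beta_sqr Fq_frob ?subrr.
rewrite mulf_eq0 subr_eq0 addr_eq0 => /orP[beta_Fq|/eqP //].
by case/negP: b_nonsquare; apply/Fq_squareP; exists beta.
Qed.

Lemma beta_notin_Fq : beta \notin inFq q.
Proof.
by rewrite unfold_in /inFq frob_beta eq_sym eqrN_self beta_neq0.
Qed.

Lemma Fq_coord_inj (x y x' y' : L) :
  x \in inFq q -> y \in inFq q -> x' \in inFq q -> y' \in inFq q ->
  x + y * beta = x' + y' * beta -> x = x' /\ y = y'.
Proof.
move=> Fx Fy Fx' Fy' e.
have e' : x - y * beta = x' - y' * beta.
  by have := congr1 (fun X => X ^+ q) e; rewrite !frobD !exprMn frob_beta !Fq_frob // !mulrN.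
have ex : x = x'.
  apply: (mulfI two_neq0); transitivity ((x + y * beta) + (x - y * beta)); first ring.
  by rewrite e e'; ring.
by split=> //; move: e; rewrite ex => /addrI /(mulIf beta_neq0).
Qed.

Lemma Fq_coord_exists (X : L) :
  exists x y, [/\ x \in inFq q, y \in inFq q & X = x + y * beta].
Proof.
exists ((X + X ^+ q) / 2), ((X - X ^+ q) / (2 * beta)); split.
- by rewrite unfold_in /inFq expr_div_n frobD frobK [2 ^+ q]Fq_frob ?rpred_nat // addrC.
- rewrite unfold_in /inFq expr_div_n frobB frobK exprMn [2 ^+ q]Fq_frob ?rpred_nat //.
  by rewrite frob_beta mulrN invrN mulrN -mulNr opprB.
- by field; rewrite two_neq0 beta_neq0.
Qed.

(* A square root x + y beta of c in L has x y = 0, so c = x ^ 2 or c = b y ^ 2. *)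
Lemma Fq_square_mulb (c : L) : c \in inFq q -> c != 0 ->
  Fq_square q (c * b) = ~~ Fq_square q c.
Proof.
move=> Fc c0; apply/idP/idP.
  case/Fq_squareP => t Ft t2; apply/negP => /Fq_squareP[s Fs s2].
  have s0 : s != 0 by apply: contra_eq_neq s2 => ->; rewrite expr0n eq_sym.
  case/negP: b_nonsquare; apply/Fq_squareP; exists (t / s); first exact: rpred_div.
  by rewrite expr_div_n t2 s2 mulrC mulKf.
move=> c_nsq; have [z z2] := Fq_sqrt Fc.
have [x [y [Fx Fy Ez]]] := Fq_coord_exists z.
have [x2 xy0] : x ^+ 2 + b * y ^+ 2 = c /\ 2 * x * y = 0.
  apply: Fq_coord_inj; try by Fq_closed.
  by rewrite -z2 Ez mul0r addr0 -beta_sqr; ring.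
move: xy0 => /eqP; rewrite !mulf_eq0 (negbTE two_neq0) /= => /orP[/eqP x0|/eqP y0].
  apply/Fq_squareP; exists (b * y); first exact: rpredM.
  by rewrite -x2 x0 expr0n add0r -beta_sqr; ring.
by case/negP: c_nsq; apply/Fq_squareP; exists x; rewrite // -x2 y0 expr0n mulr0 addr0.
Qed.

Lemma Fq_squareM (c d : L) : c \in inFq q -> c != 0 -> d \in inFq q -> d != 0 ->
  Fq_square q (c * d) = (Fq_square q c == Fq_square q d).
Proof.
move=> Fc c0 Fd d0; have [c_sq|c_nsq] := boolP (Fq_square q c).
  case/Fq_squareP: (c_sq) => s Fs s2.
  have s0 : s != 0 by move: c0; rewrite -s2 expf_eq0.
  by rewrite -s2 mulrC Fq_squareMsqr //; case: Fq_square.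
have := Fq_square_mulb Fc c0; rewrite c_nsq => /Fq_squareP[t Ft t2].
rewrite (_ : c * d = d * b * (t / b) ^+ 2); last by rewrite expr_div_n t2; field; rewrite b_neq0.
rewrite Fq_squareMsqr ?Fq_square_mulb ?rpred_div ?mulf_neq0 ?invr_eq0 ?b_neq0 //.
by move: (mulf_neq0 c0 b_neq0); rewrite -t2 expf_eq0.
Qed.

Lemma Fq_squareN (c : L) : c \in inFq q -> c != 0 ->
  Fq_square q (- c) = (Fq_square q c == (q %% 4 == 1)%N).
Proof.
move=> Fc c0.
by rewrite -mulN1r Fq_squareM ?Fq_square_N1 ?oppr_eq0 ?oner_eq0 //; Fq_closed.
Qed.

Lemma Fq_square_div (c d : L) : d \in inFq q -> d != 0 ->
  Fq_square q (c / d) = Fq_square q (c * d).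
Proof.
move=> Fd d0; rewrite -(Fq_squareMsqr (c * d) _ (invr_neq0 d0)) ?rpredV //.
by congr Fq_square; field.
Qed.

Variables (a alpha : L).
Hypotheses (Fq_a : a \in inFq q) (a_neq0 : a != 0) (a_neq1 : a != 1) (a_neqN1 : a != -1).
Hypotheses (Fq_alpha : alpha \in inFq q) (alpha_neq0 : alpha != 0).

Lemma ap1_neq0 : a + 1 != 0. Proof. by rewrite addr_eq0. Qed.
Lemma am1_neq0 : a - 1 != 0. Proof. by rewrite subr_eq0. Qed.

Lemma onemsqr_neq0 : 1 - a ^+ 2 != 0.
Proof. by rewrite subr_eq0 eq_sym sqrf_eq1 negb_or a_neq1. Qed.

Lemma ff_coord (x y : L) : x \in inFq q -> y \in inFq q ->
  ff q a (x + y * beta) = ((1 + a) * x ^+ 2 + (a - 1) * b * y ^+ 2) + (2 * a * x * y) * beta.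
Proof.
move=> Fx Fy; rewrite /ff exprSr frobD exprMn frob_beta [x ^+ q]Fq_frob // [y ^+ q]Fq_frob //.
by rewrite -beta_sqr; ring.
Qed.

Lemma npre_Fq : npre q a alpha =
  ((if Fq_square q (alpha / (a + 1)) then 2 else 0) +
   (if Fq_square q (alpha / ((a - 1) * b)) then 2 else 0))%N.
Proof.
have ff1 : ff q a 1 = a + 1 by rewrite /ff !expr1n mulr1 addrC.
have ffbeta : ff q a beta = (a - 1) * b by rewrite /ff exprSr frob_beta -beta_sqr; ring.
rewrite -ff1 -ffbeta; apply: npre_two_lines => //; rewrite ?ff1 ?ffbeta ?mulf_neq0 ?ap1_neq0 ?am1_neq0 ?b_neq0 //.
  by rewrite divr1 beta_notin_Fq.
move=> X; have [x [y [Fx Fy ->]]] := Fq_coord_exists X; rewrite ff_coord // => fX.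
have [_ /eqP] : (1 + a) * x ^+ 2 + (a - 1) * b * y ^+ 2 = alpha /\ 2 * a * x * y = 0.
  by apply: Fq_coord_inj; rewrite ?fX ?mul0r ?addr0 //; Fq_closed.
rewrite !mulf_eq0 (negbTE two_neq0) (negbTE a_neq0) /= => /orP[] /eqP->.
  by rewrite add0r mulfK ?beta_neq0 // Fy orbT.
by rewrite mul0r addr0 divr1 Fx.
Qed.

Lemma ff_eq_mul_beta (x y : L) : x \in inFq q -> y \in inFq q ->
  ff q a (x + y * beta) = alpha * beta ->
  (1 + a) * x ^+ 2 + (a - 1) * b * y ^+ 2 = 0 /\ 2 * a * x * y = alpha.
Proof.
move=> Fx Fy; rewrite ff_coord // -[alpha * beta]add0r => fX.
by apply: Fq_coord_inj; rewrite ?fX //; Fq_closed.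
Qed.

Lemma Fq_square_ratio : Fq_square q (- ((a - 1) * b / (a + 1))) = ~~ Fq_square q (1 - a ^+ 2).
Proof.
rewrite -mulNr Fq_square_div ?ap1_neq0 //; last by Fq_closed.
rewrite (_ : _ * _ = (1 - a ^+ 2) * b); last by ring.
by rewrite Fq_square_mulb ?onemsqr_neq0 //; Fq_closed.
Qed.

Lemma npre_mul_beta_nsq : Fq_square q (1 - a ^+ 2) -> npre q a (alpha * beta) = 0%N.
Proof.
rewrite -[Fq_square _ _]negbK -Fq_square_ratio => /negP no_ratio.
apply/eqP; rewrite cards_eq0; apply/eqP/setP => X; rewrite !inE.
apply/negP => /eqP; have [x [y [Fx Fy ->]]] := Fq_coord_exists X.
move=> /(ff_eq_mul_beta Fx Fy) [e1 e2].
have y0 : y != 0 by apply: contra_eq_neq e2 => ->; rewrite mulr0 eq_sym.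
apply: no_ratio; apply/Fq_squareP; exists (x / y); first exact: rpred_div.
have x2 : (a + 1) * x ^+ 2 = - ((a - 1) * b * y ^+ 2) by rewrite -[RHS]add0r -e1; ring.
rewrite expr_div_n -[x ^+ 2](mulKf ap1_neq0) x2.
by field; rewrite y0 ap1_neq0.
Qed.

Lemma ratio_sqrt_neq0 (g : L) : g ^+ 2 = - ((a - 1) * b / (a + 1)) -> g != 0.
Proof.
move=> g2; suff : g ^+ 2 != 0 by rewrite expf_eq0.
by rewrite g2 oppr_eq0 !mulf_neq0 ?invr_eq0 ?am1_neq0 ?b_neq0 ?ap1_neq0.
Qed.

Lemma ff_add_beta (s : L) : s \in inFq q -> s ^+ 2 = - ((a - 1) * b / (a + 1)) ->
  ff q a (s + beta) = 2 * a * s * beta.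
Proof.
move=> Fs s2; rewrite -[beta in s + beta]mul1r ff_coord ?rpred1 // s2.
by field; rewrite ap1_neq0.
Qed.

Lemma npre_mul_beta_sq (g : L) : g \in inFq q -> g ^+ 2 = - ((a - 1) * b / (a + 1)) ->
  npre q a (alpha * beta) = ((if Fq_square q (2 * g * alpha * a)%R then 2 else 0) +
                             (if Fq_square q (- (2 * g * alpha * a))%R then 2 else 0))%N.
Proof.
move=> Fg g2; have g0 := ratio_sqrt_neq0 g2.
have ffu := ff_add_beta Fg g2.
have ffv : ff q a (- g + beta) = 2 * a * (- g) * beta by rewrite ff_add_beta ?rpredN ?sqrrN.
have val_neq0 s : s != 0 -> 2 * a * s * beta != 0.
  by move=> s0; rewrite !mulf_neq0 ?two_neq0 ?a_neq0 ?beta_neq0.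
have sq_eq s : s \in inFq q -> s != 0 ->
    Fq_square q (alpha * beta / (2 * a * s * beta)) = Fq_square q (2 * s * alpha * a).
  move=> Fs s0; rewrite (_ : _ / _ = alpha / (2 * a * s)); last by field; rewrite s0 a_neq0 beta_neq0 two_neq0.
  by rewrite Fq_square_div ?mulf_neq0 ?two_neq0 ?a_neq0 //; [congr Fq_square; ring | Fq_closed].
have gb0 : g + beta != 0 by apply: (ff_neq0 (q := q) (a := a)); rewrite ffu val_neq0.
rewrite (npre_two_lines (c := alpha * beta) (u := g + beta) (v := - g + beta)) ?ffu ?ffv.
- by rewrite !sq_eq ?oppr_eq0 ?rpredN // mulrN mulNr mulNr.
- by rewrite mulf_neq0 ?beta_neq0.
- exact: val_neq0.
- by rewrite val_neq0 ?oppr_eq0.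
- apply/negP => Fk; set k := _ / _ in Fk.
  have [eg /esym k1] : - g = k * g /\ 1 = k.
    by apply: Fq_coord_inj; [Fq_closed..| rewrite mul1r -mulrDr divfK].
  by move/eqP: eg; rewrite k1 mul1r eq_sym eqrN_self (negbTE g0).
move=> X; have [x [y [Fx Fy ->]]] := Fq_coord_exists X.
case/(ff_eq_mul_beta Fx Fy) => e1 _.
have : x ^+ 2 == (g * y) ^+ 2.
  rewrite exprMn g2 -subr_eq0; apply/eqP; rewrite -[RHS](mul0r (a + 1)^-1) -e1.
  by field; rewrite ap1_neq0.
rewrite eqf_sqr => /orP[] /eqP->; [apply/orP; left | apply/orP; right].
  by rewrite (_ : _ + _ = y * (g + beta)) ?mulfK //; ring.
rewrite (_ : _ + _ = y * (- g + beta)) ?mulfK //; last by ring.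
by apply: (ff_neq0 (q := q) (a := a)); rewrite ffv val_neq0 ?oppr_eq0.
Qed.

Lemma npre_Fq_chi2 : npre q a alpha =
  (if (chi2 q (alpha * (a - 1)) == 1) && (chi2 q (alpha * (a + 1)) == -1) then 0%N
   else if (chi2 q (alpha * (a - 1)) == -1) && (chi2 q (alpha * (a + 1)) == 1) then 4%N
   else 2%N).
Proof.
have am0 : alpha * (a - 1) != 0 by rewrite mulf_neq0 ?am1_neq0.
have ap0 : alpha * (a + 1) != 0 by rewrite mulf_neq0 ?ap1_neq0.
rewrite npre_Fq !Fq_square_div ?mulrA ?Fq_square_mulb ?mulf_neq0 ?ap1_neq0 ?am1_neq0 ?b_neq0 //;
  try by Fq_closed.
rewrite chi2_eq1 // chi2_eqN1 // chi2_eqN1 // chi2_eq1 //.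
by case: (Fq_square q (alpha * (a - 1))); case: (Fq_square q (alpha * (a + 1))).
Qed.

Lemma npre_mul_beta_chi2_eq1 : chi2 q (1 - a ^+ 2) = 1 -> npre q a (alpha * beta) = 0%N.
Proof. by move/eqP; rewrite chi2_eq1 ?onemsqr_neq0 //; apply: npre_mul_beta_nsq. Qed.

Lemma npre_mul_beta_3mod4 : (q %% 4 = 3)%N ->
  npre q a (alpha * beta) = (if chi2 q (1 - a ^+ 2) == 1 then 0%N else 2%N).
Proof.
move=> q3; rewrite chi2_eq1 ?onemsqr_neq0 //.
have [/npre_mul_beta_nsq //|nsq] := ifPn.
have := Fq_square_ratio; rewrite nsq => /Fq_squareP[g Fg g2].
have c0 : 2 * g * alpha * a != 0 by rewrite !mulf_neq0 ?two_neq0 ?(ratio_sqrt_neq0 g2).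
rewrite (npre_mul_beta_sq Fg g2) Fq_squareN // ?q3; last by Fq_closed.
by case: Fq_square.
Qed.

Lemma npre_mul_beta_1mod4 : (q %% 4 = 1)%N ->
  forall g : L, g \in inFq q -> g ^+ 2 = - ((a - 1) * b / (a + 1)) ->
  npre q a (alpha * beta) = (if chi2 q (2 * g * alpha * a) == 1 then 4%N else 0%N).
Proof.
move=> q1 g Fg g2.
have c0 : 2 * g * alpha * a != 0 by rewrite !mulf_neq0 ?two_neq0 ?(ratio_sqrt_neq0 g2).
rewrite (npre_mul_beta_sq Fg g2) Fq_squareN // ?q1 ?chi2_eq1 //; last by Fq_closed.
by case: Fq_square.
Qed.

End QuadraticExtension.

Theorem theorem21 (L : finFieldType) (p k q : nat)
  (hp : prime p) (hodd : odd p) (hk : (0 < k)%N) (hq : q = (p ^ k)%N)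
  (hL : #|L| = (q ^ 2)%N)
  (a b beta alpha : L)
  (ha : inFq q a) (ha0 : a != 0) (ha1 : a != 1) (ha2 : a != -1)
  (hb : inFq q b) (hbns : chi2 q b = -1)
  (hbeta : beta ^+ 2 = b)
  (hal : inFq q alpha) (hal0 : alpha != 0) :
  [/\ npre q a alpha =
        (if (chi2 q (alpha * (a - 1)) == 1) && (chi2 q (alpha * (a + 1)) == -1) then 0%N
         else if (chi2 q (alpha * (a - 1)) == -1) && (chi2 q (alpha * (a + 1)) == 1) then 4%N
         else 2%N),
      (q %% 4 = 3)%N ->
        npre q a (alpha * beta) = (if chi2 q (1 - a ^+ 2) == 1 then 0%N else 2%N)
    & (q %% 4 = 1)%N ->
        (chi2 q (1 - a ^+ 2) = 1 -> npre q a (alpha * beta) = 0%N) /\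
        (chi2 q (1 - a ^+ 2) = -1 ->
           forall ga : L, inFq q ga -> ga ^+ 2 = - ((a - 1) * b / (a + 1)) ->
             npre q a (alpha * beta) =
               (if chi2 q (2 * ga * alpha * a) == 1 then 4%N else 0%N))].
Proof.
have q_odd : odd q by rewrite hq oddX hodd orbT.
split.
- exact: (npre_Fq_chi2 hL q_odd hb hbns hbeta ha ha0 ha1 ha2 hal hal0).
- exact: (npre_mul_beta_3mod4 hL q_odd hb hbns hbeta ha ha0 ha1 ha2 hal hal0).
- move=> q1; split.
    exact: (npre_mul_beta_chi2_eq1 hL q_odd hb hbns hbeta ha ha1 ha2 hal hal0).
  by move=> _; exact: (npre_mul_beta_1mod4 hL q_odd hb hbns hbeta ha ha0 ha1 ha2 hal hal0 q1).
Qed.
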